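(* For integers $m,l\ge0$ let $B_{ml}=ML^{m+1}\hat L^{-l}+(-1)^{l+m}\hat L^{-l}L^mML$ and $\hat B_{ml}=L^m\hat L^{-l+1}\hat M+(-1)^{l+m}\hat L\hat M\hat L^{-l}L^m$. Then for $\bar B_{ml}=B_{ml}$ or $\hat B_{ml}$ and every odd $k\ge1$, $$\frac{\partial\bar B_{ml}}{\partial t_k}=[(L^k)_+,\bar B_{ml}],\qquad \frac{\partial\bar B_{ml}}{\partial \hat t_k}=[-(\hat L^k)_-,\bar B_{ml}].$$
   Context: Setting: the two-component BKP hierarchy. $D=d/dx$; pseudo-differential operators multiply via $D^i f=\sum_{r\ge0}\binom{i}{r}D^r(f)D^{i-r}$; $A_\pm$ are the parts of $A=\sum f_iD^i$ with $i\ge0$, resp. $i<0$; $A^*=\sum(-D)^if_i$. Dressing operators $\Phi=1+\sum_{i\ge1}a_iD^{-i}$, $\hat\Phi=1+\sum_{i\ge1}b_iD^i$, depending on $t=(t_1,t_3,\dots)$, $\hat t=(\hat t_1,\hat t_3,\dots)$, $t_1=x$, with $\Phi^*=D\Phi^{-1}D^{-1}$, $\hat\Phi^*=D\hat\Phi^{-1}D^{-1}$; Lax operators $L=\Phi D\Phi^{-1}$, $\hat L=\hat\Phi D^{-1}\hat\Phi^{-1}$; flows (odd $k$): $\partial_{t_k}\Phi=-(L^k)_-\Phi$, $\partial_{t_k}\hat\Phi=((L^k)_+-\delta_{k1}\hat L^{-1})\hat\Phi$, $\partial_{\hat t_k}\Phi=-(\hat L^k)_-\Phi$, $\partial_{\hat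 t_k}\hat\Phi=(\hat L^k)_+\hat\Phi$. Orlov–Schulman operators $M=\Phi\Gamma\Phi^{-1}$, $\hat M=\hat\Phi\hat\Gamma\hat\Phi^{-1}$, $\Gamma=\sum_{k\ \mathrm{odd}}kt_kD^{k-1}$, $\hat\Gamma=x+\sum_{k\ \mathrm{odd}}k\hat t_kD^{-k-1}$. *)

From HB Require Import structures.
From mathcomp Require Import all_boot all_order all_algebra.
Set Implicit Arguments.
Unset Strict Implicit.
Unset Printing Implicit Defensive.
Import GRing.Theory Num.Theory.
Local Open Scope ring_scope.

Definition comm (Op : ringType) (A B : Op) : Op := A * B - B * A.

Definition is_derivation (Op : ringType) (d : Op -> Op) : Prop :=
  (forall A B, d (A + B) = d A + d B) /\ (forall A B, d (A * B) = d A * B + A * d B).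

(* Data of an (abstract) algebra of pseudo-differential operators in which
   all products occurring in the paper exist. *)
Record PsdoData (Op : unitRingType) := {
  Dop   : Op;               (* D = d/dx *)
  pplus : Op -> Op;
  adj   : Op -> Op;
  dt    : nat -> Op -> Op;  (* d/dt_k  acting on coefficients *)
  dth   : nat -> Op -> Op;  (* d/dhat t_k acting on coefficients *)
  Gam   : Op;               (* Gamma = sum_{k odd} k t_k D^(k-1) *)
  hGam  : Op                (* hat Gamma = x + sum_{k odd} k hat t_k D^(-k-1) *)
}.

Definition pminus (Op : unitRingType) (S : PsdoData Op) (A : Op) : Op :=
  A - pplus S A.

Record PsdoAxioms (Op : unitRingType) (S : PsdoData Op) : Prop := {
  D_unit : Dop S \is a GRing.unit;
  pplus_add : forall A B, pplus S (A + B) = pplus S A + pplus S B;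
  pplus_idem : forall A, pplus S (pplus S A) = pplus S A;
  pplus_Dpow : forall i : int,
      pplus S (Dop S ^ i) = if (0 <= i)%R then Dop S ^ i else 0;
  adj_add : forall A B, adj S (A + B) = adj S A + adj S B;
  adj_mul : forall A B, adj S (A * B) = adj S B * adj S A;
  adj_invol : forall A, adj S (adj S A) = A;
  adj_D : adj S (Dop S) = - Dop S;
  dt_der : forall k, is_derivation (dt S k);
  dth_der : forall k, is_derivation (dth S k);
  dt_D : forall k, dt S k (Dop S) = 0;
  dth_D : forall k, dth S k (Dop S) = 0;
  (* t_1 = x : d/dt_1 acts on coefficients as d/dx *)
  dt1_ad : forall A, dt S 1 A = comm (Dop S) A;
  (* the coefficients of Gamma: x (at D^0) and x-independent k t_k (k>=3) *)
  Gam_comm : comm (Dop S) (Gam S) = 1;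
  Gam_dt : forall k, odd k -> dt S k (Gam S) = k%:R * Dop S ^+ k.-1;
  Gam_dth : forall k, odd k -> dth S k (Gam S) = 0;
  (* the coefficients of hat Gamma: x (at D^0) and x-independent k hat t_k *)
  hGam_comm : comm (Dop S) (hGam S) = 1;
  hGam_dt : forall k, odd k -> dt S k (hGam S) = (k == 1)%:R;
  hGam_dth : forall k, odd k ->
      dth S k (hGam S) = k%:R * Dop S ^ (- (k.+1 : int))
}.

Section Ops.
Variables (Op : unitRingType) (S : PsdoData Op).
Local Notation D := (Dop S).

Definition LaxL (Phi : Op) : Op := Phi * D * Phi^-1.
Definition LaxLh (hPhi : Op) : Op := hPhi * D^-1 * hPhi^-1.
Definition OSM (Phi : Op) : Op := Phi * Gam S * Phi^-1.
Definition OSMh (hPhi : Op) : Op := hPhi * hGam S * hPhi^-1.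

Definition Bml (Phi hPhi : Op) (m l : nat) : Op :=
  OSM Phi * LaxL Phi ^+ m.+1 * LaxLh hPhi ^ (- (l : int))
  + (-1) ^+ (l + m) * (LaxLh hPhi ^ (- (l : int)) * LaxL Phi ^+ m
                        * OSM Phi * LaxL Phi).

Definition hBml (Phi hPhi : Op) (m l : nat) : Op :=
  LaxL Phi ^+ m * LaxLh hPhi ^ (1 - (l : int)) * OSMh hPhi
  + (-1) ^+ (l + m) * (LaxLh hPhi * OSMh hPhi * LaxLh hPhi ^ (- (l : int))
                        * LaxL Phi ^+ m).

Definition BKP2_dressing (Phi hPhi : Op) : Prop :=
  [/\ Phi \is a GRing.unit, hPhi \is a GRing.unit,
      (* Phi = 1 + sum_{i>=1} a_i D^-i ; hPhi = 1 + sum_{i>=1} b_i D^i *)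
      pplus S Phi = 1, pminus S hPhi = 0 &
      adj S Phi = D * Phi^-1 * D^-1 /\ adj S hPhi = D * hPhi^-1 * D^-1].

Definition BKP2_flows (Phi hPhi : Op) : Prop :=
  forall k : nat, odd k ->
  [/\ dt S k Phi = - pminus S (LaxL Phi ^+ k) * Phi,
      dt S k hPhi = (pplus S (LaxL Phi ^+ k) - (k == 1)%:R * (LaxLh hPhi)^-1) * hPhi,
      dth S k Phi = - pminus S (LaxLh hPhi ^+ k) * Phi &
      dth S k hPhi = pplus S (LaxLh hPhi ^+ k) * hPhi].

End Ops.

From HB Require Import structures.
From mathcomp Require Import all_boot all_order all_algebra.
Import GRing.Theory.
Local Open Scope ring_scope.
Set Implicit Arguments.
Unset Strict Implicit.

(** For a derivation [d] and an operator [P], the map [X |-> d X - [P, X]] is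
   again a derivation, so the operators [X] with [d X = [P, X]] form a subring
   closed under inverses.  Both [B_ml] and [hat B_ml] are built from [L], [M],
   [hat L], [hat M] by ring operations and inverses, so it suffices to check the
   four Lax equations for these.  Those follow from the dressing equations
   [d Phi = A Phi], which give [d (Phi Y Phi^-1) = [A, Phi Y Phi^-1] + Phi (d Y) Phi^-1],
   and from [[D, Gamma] = [D, hat Gamma] = 1]. *)

Section Derivation.
Variables (R : unitRingType) (d : R -> R).
Hypothesis dd : is_derivation d.

Lemma derivationD A B : d (A + B) = d A + d B. Proof. exact: dd.1. Qed.
Lemma derivationM A B : d (A * B) = d A * B + A * d B. Proof. exact: dd.2. Qed.

Lemma derivation0 : d 0 = 0.
Proof. by apply: (addrI (d 0)); rewrite -derivationD !addr0. Qed.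

Lemma derivationN A : d (- A) = - d A.
Proof. by apply/eqP; rewrite -addr_eq0 -derivationD addNr derivation0. Qed.

Lemma derivation1 : d 1 = 0.
Proof.
have := derivationM 1 1; rewrite !mulr1 !mul1r => d11.
by apply: (addrI (d 1)); rewrite -d11 addr0.
Qed.

Lemma derivationV A : A \is a GRing.unit -> d A^-1 = - (A^-1 * d A * A^-1).
Proof.
move=> uA; have := derivationM A A^-1.
rewrite mulrV // derivation1 => /esym/eqP; rewrite addrC addr_eq0 => /eqP dAV.
by rewrite -[d A^-1](mulKr uA) dAV mulrN mulrA.
Qed.

Lemma derivation_conj Phi A Y : Phi \is a GRing.unit -> d Phi = A * Phi ->
  d (Phi * Y * Phi^-1) = comm A (Phi * Y * Phi^-1) + Phi * d Y * Phi^-1.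
Proof.
move=> uP dP; rewrite !derivationM derivationV // dP /comm.
by rewrite mulrDl !mulrN !mulrA mulrK // addrAC.
Qed.

Lemma derivation_exp_id A n : d A = 1 -> d (A ^+ n.+1) = n.+1%:R * A ^+ n.
Proof.
move=> dA; elim: n => [|n IHn]; first by rewrite expr1 dA mulr1.
rewrite exprS derivationM IHn dA mul1r mulrA (commr_nat A) -mulrA -exprS.
by rewrite -[in X in X + _](mul1r (A ^+ n.+1)) -mulrDl addrC natr1.
Qed.

Lemma derivation_expV_id A n : A \is a GRing.unit -> d A = 1 ->
  d (A^-1 ^+ n) = - (n%:R * A^-1 ^+ n.+1).
Proof.
move=> uA dA; have dAV : d A^-1 = - A^-1 ^+ 2 by rewrite derivationV // dA mulr1.
elim: n => [|n IHn]; first by rewrite expr0 derivation1 mul0r oppr0.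
rewrite exprS derivationM IHn dAV mulrN mulrA (commr_nat A^-1) -mulrA -exprS.
by rewrite mulNr -exprD add2n -opprD -[in X in X + _](mul1r (A^-1 ^+ n.+2)) -mulrDl addrC natr1.
Qed.

Lemma derivation_kerD A B : d A = 0 -> d B = 0 -> d (A + B) = 0.
Proof. by rewrite derivationD => -> ->; rewrite addr0. Qed.

Lemma derivation_kerM A B : d A = 0 -> d B = 0 -> d (A * B) = 0.
Proof. by rewrite derivationM => -> ->; rewrite mul0r mulr0 addr0. Qed.

Lemma derivation_kerN1 : d (-1) = 0.
Proof. by rewrite derivationN derivation1 oppr0. Qed.

Lemma derivation_kerX A n : d A = 0 -> d (A ^+ n) = 0.
Proof.
move=> dA; elim: n => [|n IHn]; first exact: derivation1.
by rewrite exprS derivation_kerM.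
Qed.

Lemma derivation_kerXz A (z : int) : A \is a GRing.unit -> d A = 0 -> d (A ^ z) = 0.
Proof.
move=> uA dA; case: z => n; first by rewrite -exprnP derivation_kerX.
by rewrite NegzE -exprnN derivationV ?unitrX // derivation_kerX // mulr0 mul0r oppr0.
Qed.

End Derivation.

Lemma derivationB (R : unitRingType) (d e : R -> R) :
  is_derivation d -> is_derivation e -> is_derivation (fun X => d X - e X).
Proof.
move=> dd de; split=> A B.
  by rewrite (derivationD dd) (derivationD de) opprD addrACA.
by rewrite (derivationM dd) (derivationM de) mulrBl mulrBr opprD addrACA.
Qed.

Lemma comm_derivation (R : unitRingType) (P : R) : is_derivation (comm P).
Proof.
split=> A B; rewrite /comm.
  by rewrite mulrDr mulrDl opprD addrACA.
by rewrite mulrBl mulrBr !mulrA addrA subrK.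
Qed.

Lemma comm_derivationl (R : unitRingType) (X : R) : is_derivation (fun A => comm A X).
Proof.
split=> A B; rewrite /comm.
  by rewrite mulrDr mulrDl opprD addrACA.
by rewrite mulrBl mulrBr !mulrA [RHS]addrC addrA subrK.
Qed.

Lemma comm_conj (R : unitRingType) (Phi X Y : R) : Phi \is a GRing.unit ->
  comm (Phi * X * Phi^-1) (Phi * Y * Phi^-1) = Phi * comm X Y * Phi^-1.
Proof. by move=> uP; rewrite /comm !mulrBr !mulrBl !mulrA !mulrVK. Qed.

Lemma conj_exp (R : unitRingType) (Phi X : R) n : Phi \is a GRing.unit ->
  (Phi * X * Phi^-1) ^+ n = Phi * X ^+ n * Phi^-1.
Proof.
move=> uP; elim: n => [|n IHn]; first by rewrite !expr0 mulr1 mulrV.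
by rewrite exprS IHn !mulrA mulrVK // -(mulrA _ X) -exprS.
Qed.

Lemma commDl (R : unitRingType) (A B X : R) : comm (A + B) X = comm A X + comm B X.
Proof. exact: derivationD (comm_derivationl X) A B. Qed.

Lemma commNl (R : unitRingType) (A X : R) : comm (- A) X = - comm A X.
Proof. exact: derivationN (comm_derivationl X) A. Qed.

Lemma comm_exp_self (R : nzRingType) (A : R) n : comm (A ^+ n) A = 0.
Proof. by rewrite /comm -exprSr exprS subrr. Qed.

Section LaxFlow.
Variables (R : unitRingType) (d : R -> R) (P : R).
Hypothesis dd : is_derivation d.

Definition lax_flow X := d X = comm P X.

Let d_ad X := d X - comm P X.

Let d_adE X : lax_flow X <-> d_ad X = 0.
Proof. by rewrite /d_ad; split=> [->|/eqP]; rewrite ?subrr // subr_eq0 => /eqP. Qed.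

Let d_ad_derivation : is_derivation d_ad.
Proof. exact: derivationB dd (comm_derivation P). Qed.

Lemma lax_flowD X Y : lax_flow X -> lax_flow Y -> lax_flow (X + Y).
Proof. by move=> /d_adE dX /d_adE dY; apply/d_adE/derivation_kerD. Qed.

Lemma lax_flowM X Y : lax_flow X -> lax_flow Y -> lax_flow (X * Y).
Proof. by move=> /d_adE dX /d_adE dY; apply/d_adE/derivation_kerM. Qed.

Lemma lax_flowN1 : lax_flow (-1).
Proof. exact/d_adE/derivation_kerN1. Qed.

Lemma lax_flowX X n : lax_flow X -> lax_flow (X ^+ n).
Proof. by move=> /d_adE dX; apply/d_adE/derivation_kerX. Qed.

Lemma lax_flowXz X (z : int) : X \is a GRing.unit -> lax_flow X -> lax_flow (X ^ z).
Proof. by move=> uX /d_adE dX; apply/d_adE/derivation_kerXz. Qed.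

End LaxFlow.

Section BKP.
Variables (Op : unitRingType) (S : PsdoData Op).
Hypothesis HS : PsdoAxioms S.
Variables Phi hPhi : Op.
Hypotheses (Hdress : BKP2_dressing S Phi hPhi) (Hflow : BKP2_flows S Phi hPhi).
Variable k : nat.
Hypothesis k_odd : odd k.

Local Notation D := (Dop S).
Local Notation L := (LaxL S Phi).
Local Notation hL := (LaxLh S hPhi).
Local Notation M := (OSM S Phi).
Local Notation hM := (OSMh S hPhi).
Local Notation P := (pplus S (L ^+ k)).
Local Notation Q := (- pminus S (hL ^+ k)).

Let uPhi : Phi \is a GRing.unit. Proof. by case: Hdress. Qed.
Let uhPhi : hPhi \is a GRing.unit. Proof. by case: Hdress. Qed.
Let uD : D \is a GRing.unit. Proof. exact: D_unit HS. Qed.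

Lemma LaxL_unit : L \is a GRing.unit.
Proof. by rewrite /LaxL !unitrMl ?unitrV. Qed.

Lemma LaxLh_unit : hL \is a GRing.unit.
Proof. by rewrite /LaxLh !unitrMl ?unitrV. Qed.

Lemma LaxLh_inv : hL^-1 = hPhi * D * hPhi^-1.
Proof. by rewrite /LaxLh !invrM ?unitrMl ?unitrV // !invrK mulrA. Qed.

Let dt_derivation := dt_der HS k.
Let dth_derivation := dth_der HS k.

Let dt_Dinv : dt S k D^-1 = 0.
Proof. by rewrite (derivationV dt_derivation) // dt_D // mulr0 mul0r oppr0. Qed.

Let dth_Dinv : dth S k D^-1 = 0.
Proof. by rewrite (derivationV dth_derivation) // dth_D // mulr0 mul0r oppr0. Qed.

Let minus_P : - pminus S (L ^+ k) = P - L ^+ k.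
Proof. by rewrite /pminus opprB. Qed.

Let plus_Q : pplus S (hL ^+ k) = Q + hL ^+ k.
Proof. by rewrite /pminus opprB subrK. Qed.

Lemma dt_LaxL : lax_flow (dt S k) P L.
Proof.
case: (Hflow k_odd) => dPhi _ _ _.
rewrite /lax_flow {1}/LaxL (derivation_conj dt_derivation _ uPhi dPhi) dt_D //.
by rewrite mulr0 mul0r addr0 minus_P commDl commNl comm_exp_self oppr0 addr0.
Qed.

Lemma dt_OSM : lax_flow (dt S k) P M.
Proof.
case: (Hflow k_odd) => dPhi _ _ _.
rewrite /lax_flow {1}/OSM (derivation_conj dt_derivation _ uPhi dPhi) (Gam_dt HS k_odd) -/(OSM S Phi).
rewrite minus_P commDl commNl.
suff -> : comm (L ^+ k) M = Phi * (k%:R * D ^+ k.-1) * Phi^-1 by rewrite subrK.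
have k_pos : k = k.-1.+1 by case: k k_odd.
rewrite /LaxL /OSM conj_exp // comm_conj // {1 2}k_pos.
by rewrite (derivation_exp_id (comm_derivationl _)) ?(Gam_comm HS).
Qed.

Lemma dt_LaxLh : lax_flow (dt S k) P hL.
Proof.
case: (Hflow k_odd) => _ dhPhi _ _.
rewrite /lax_flow {1}/LaxLh (derivation_conj dt_derivation _ uhPhi dhPhi) dt_Dinv.
rewrite mulr0 mul0r addr0 commDl commNl.
case: (k == 1); rewrite ?mul1r ?mul0r ?(derivation0 (comm_derivationl _)) ?oppr0 ?addr0 //.
by rewrite /comm mulVr ?mulrV ?LaxLh_unit // subrr oppr0 addr0.
Qed.

Lemma dt_OSMh : lax_flow (dt S k) P hM.
Proof.
case: (Hflow k_odd) => _ dhPhi _ _.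
rewrite /lax_flow {1}/OSMh (derivation_conj dt_derivation _ uhPhi dhPhi) (hGam_dt HS k_odd).
case: (k == 1); rewrite ?mul1r ?mul0r ?subr0 ?mulr0 ?mul0r ?addr0 //.
by rewrite mulr1 mulrV // commDl commNl LaxLh_inv comm_conj // (hGam_comm HS) mulr1 mulrV // subrK.
Qed.

Lemma dth_LaxL : lax_flow (dth S k) Q L.
Proof.
case: (Hflow k_odd) => _ _ dPhi _.
rewrite /lax_flow {1}/LaxL (derivation_conj dth_derivation _ uPhi dPhi).
by rewrite dth_D // mulr0 mul0r addr0.
Qed.

Lemma dth_OSM : lax_flow (dth S k) Q M.
Proof.
case: (Hflow k_odd) => _ _ dPhi _.
rewrite /lax_flow {1}/OSM (derivation_conj dth_derivation _ uPhi dPhi).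
by rewrite (Gam_dth HS k_odd) mulr0 mul0r addr0.
Qed.

Lemma dth_LaxLh : lax_flow (dth S k) Q hL.
Proof.
case: (Hflow k_odd) => _ _ _ dhPhi.
rewrite /lax_flow {1}/LaxLh (derivation_conj dth_derivation _ uhPhi dhPhi) dth_Dinv.
by rewrite mulr0 mul0r addr0 plus_Q commDl comm_exp_self addr0.
Qed.

Lemma dth_OSMh : lax_flow (dth S k) Q hM.
Proof.
case: (Hflow k_odd) => _ _ _ dhPhi.
rewrite /lax_flow {1}/OSMh (derivation_conj dth_derivation _ uhPhi dhPhi) (hGam_dth HS k_odd) -/(OSMh S hPhi).
rewrite plus_Q commDl.
suff -> : comm (hL ^+ k) hM = - (hPhi * (k%:R * D ^ (- (k.+1 : int))) * hPhi^-1).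
  by rewrite subrK.
rewrite /LaxLh /OSMh conj_exp // comm_conj //.
rewrite (derivation_expV_id (comm_derivationl _)) ?(hGam_comm HS) //.
by rewrite exprVn exprnN mulrN mulNr.
Qed.

End BKP.

Ltac lax_closure :=
  repeat first [ assumption | apply: lax_flowD | apply: lax_flowM
               | apply: lax_flowXz | apply: lax_flowX | apply: lax_flowN1 ].

Unset Implicit Arguments.

Theorem proposition3p7 (Op : unitRingType) (S : PsdoData Op)
  (HS : PsdoAxioms S) (Phi hPhi : Op)
  (Hdress : BKP2_dressing S Phi hPhi) (Hflow : BKP2_flows S Phi hPhi)
  (m l k : nat) (Hk : odd k) (Bb : Op) :
  Bb = Bml S Phi hPhi m l \/ Bb = hBml S Phi hPhi m l ->
  dt S k Bb = comm (pplus S (LaxL S Phi ^+ k)) Bb /\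
  dth S k Bb = comm (- pminus S (LaxLh S hPhi ^+ k)) Bb.
Proof.
move=> Bb_def.
have uL := LaxL_unit HS Hdress; have uhL := LaxLh_unit HS Hdress.
have dt_derivation := dt_der HS k; have dth_derivation := dth_der HS k.
have Lt := dt_LaxL HS Hdress Hflow Hk; have Mt := dt_OSM HS Hdress Hflow Hk.
have hLt := dt_LaxLh HS Hdress Hflow Hk; have hMt := dt_OSMh HS Hdress Hflow Hk.
have Lth := dth_LaxL HS Hdress Hflow Hk; have Mth := dth_OSM HS Hdress Hflow Hk.
have hLth := dth_LaxLh HS Hdress Hflow Hk; have hMth := dth_OSMh HS Hdress Hflow Hk.
by split; case: Bb_def => ->; rewrite /Bml /hBml; lax_closure.
Qed.
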